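(* Let $f:[1,\infty)\to\mathbb{R}$ be defined by $f(1)=0$ and $$f(x)=\frac{x+1}{2}\log\Big(\frac{x+1}{2}\Big)-\frac{x-1}{2}\log\Big(\frac{x-1}{2}\Big),\qquad x\in(1,\infty).$$ Then: (i) $f$ is continuous, strictly monotone increasing and concave, with $\lim_{x\to1}f'(x)=\infty$; (ii) there exists $C\in(0,1]$ such that $f(x)\le C\sqrt{x^2-1}$ for all $x\in[1,\infty)$; (iii) $f(x)\ge\log(x)$ for all $x\in[1,\infty)$. *)

From Stdlib Require Import Reals Lra.
From Coquelicot Require Import Coquelicot.
Open Scope R_scope.

(* The function f : [1,oo) -> R of the paper; f 1 = 0.  Values for x < 1 are
   irrelevant (set to 0); every statement only uses f on [1,oo). *)
Definition fpaper (x : R) : R :=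
  if Rle_dec x 1 then 0
  else (x + 1) / 2 * ln ((x + 1) / 2) - (x - 1) / 2 * ln ((x - 1) / 2).

From Stdlib Require Import Reals Lra.
From Coquelicot Require Import Coquelicot.
Open Scope R_scope.

(* With v = (x - 1) / 2 and phi t = t ln t, f x = phi (v + 1) - phi v.  Its
   derivative ln((x + 1) / (x - 1)) / 2 is positive, decreasing and blows up at
   1, so (i) follows from the mean value theorem.  Both bounds come from
   1 - s / t <= ln t - ln s <= t / s - 1: for (ii) (with C = 1) applied to the
   square roots of v and v + 1, for (iii) to the ratios (v + 1) / v and
   (v + 1) / (2 v + 1).  Continuity at 1 follows from 0 <= f x <= sqrt (x^2 - 1). *)

Section MeanValueOnHalfLine.

Variables (f df : R -> R) (a : R).
Hypothesis f_cont : forall x, a <= x -> continuity_pt f x.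
Hypothesis f_derive : forall x, a < x -> is_derive f x (df x).

Lemma MVT_half_line x y : a <= x -> x < y ->
  exists c, x < c < y /\ f y - f x = df c * (y - x).
Proof.
  intros Hax Hxy.
  pose (pr := fun c (Hc : x < c < y) =>
    exist (fun l => derivable_pt_lim f c l) (df c)
      (proj1 (is_derive_Reals _ _ _) (f_derive c ltac:(lra)))).
  destruct (MVT f id x y pr (fun c _ => derivable_pt_id c) Hxy
              (fun c Hc => f_cont c ltac:(lra))
              (fun c _ => derivable_continuous_pt _ _ (derivable_pt_id c)))
    as [c [Hc E]].
  exists c. split; [exact Hc|].
  rewrite derive_pt_id in E. simpl in E. unfold id in E. lra.
Qed.

Lemma strict_increasing_of_derive_pos :
  (forall x, a < x -> 0 < df x) ->
  forall x y, a <= x -> x < y -> f x < f y.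
Proof.
  intros df_pos x y Hax Hxy.
  destruct (MVT_half_line x y Hax Hxy) as [c [Hc E]].
  pose proof (df_pos c ltac:(lra)). nra.
Qed.

Lemma concave_of_derive_antitone :
  (forall x y, a < x -> x <= y -> df y <= df x) ->
  forall x y t, a <= x -> a <= y -> 0 <= t <= 1 ->
    t * f x + (1 - t) * f y <= f (t * x + (1 - t) * y).
Proof.
  intros df_anti.
  assert (chord : forall x y t, a <= x -> x < y -> 0 < t < 1 ->
            t * f x + (1 - t) * f y <= f (t * x + (1 - t) * y)).
  { intros x y t Hax Hxy Ht. set (z := t * x + (1 - t) * y).
    destruct (MVT_half_line x z Hax ltac:(unfold z; nra)) as [c1 [Hc1 E1]].
    destruct (MVT_half_line z y ltac:(unfold z; nra) ltac:(unfold z; nra))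
      as [c2 [Hc2 E2]].
    pose proof (df_anti c1 c2 ltac:(lra) ltac:(lra)) as Hdf.
    assert (Hzx : z - x = (1 - t) * (y - x)) by (unfold z; ring).
    assert (Hyz : y - z = t * (y - x)) by (unfold z; ring).
    rewrite Hzx in E1. rewrite Hyz in E2.
    assert (0 <= t * (1 - t) * (y - x)) by (apply Rmult_le_pos; nra).
    nra. }
  intros x y t Hx Hy Ht.
  destruct (Req_dec t 0) as [->|Ht0].
  { replace (0 * x + (1 - 0) * y) with y by ring. lra. }
  destruct (Req_dec t 1) as [->|Ht1].
  { replace (1 * x + (1 - 1) * y) with x by ring. lra. }
  destruct (Rtotal_order x y) as [Hxy|[<-|Hyx]].
  - apply chord; lra.
  - replace (t * x + (1 - t) * x) with x by ring. lra.
  - pose proof (chord y x (1 - t) Hy Hyx ltac:(lra)) as K.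
    replace ((1 - t) * y + (1 - (1 - t)) * x) with (t * x + (1 - t) * y) in K
      by ring.
    lra.
Qed.

End MeanValueOnHalfLine.

Lemma ln_le_sub_1 z : 0 < z -> ln z <= z - 1.
Proof. intros Hz. pose proof (exp_ineq1_le (ln z)). rewrite exp_ln in H; lra. Qed.

Lemma ln_sub_le s t : 0 < s -> 0 < t -> ln t - ln s <= t / s - 1.
Proof.
  intros Hs Ht. rewrite <- ln_div by lra.
  apply ln_le_sub_1, Rdiv_lt_0_compat; lra.
Qed.

Lemma ln_sub_ge s t : 0 < s -> 0 < t -> 1 - s / t <= ln t - ln s.
Proof. intros Hs Ht. pose proof (ln_sub_le t s Ht Hs). lra. Qed.

Definition xlnx (t : R) : R := t * ln t.

Lemma fpaper_le_1 x : x <= 1 -> fpaper x = 0.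
Proof. intros Hx. unfold fpaper. destruct (Rle_dec x 1); [reflexivity|lra]. Qed.

Lemma fpaper_xlnx x : 1 <= x ->
  fpaper x = xlnx ((x - 1) / 2 + 1) - xlnx ((x - 1) / 2).
Proof.
  intros Hx. unfold fpaper, xlnx.
  destruct (Rle_dec x 1) as [H|H].
  - replace x with 1 by lra. replace ((1 - 1) / 2) with 0 by field.
    rewrite Rplus_0_l, ln_1. ring.
  - replace ((x - 1) / 2 + 1) with ((x + 1) / 2) by field. reflexivity.
Qed.

Lemma ln_le_xlnx_succ_sub v : 0 <= v -> ln (2 * v + 1) <= xlnx (v + 1) - xlnx v.
Proof.
  intros Hv. unfold xlnx. destruct (Req_dec v 0) as [->|Hv0].
  { replace (2 * 0 + 1) with 1 by ring. rewrite Rplus_0_l, ln_1. lra. }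
  assert (Hv' : 0 < v) by lra.
  pose proof (ln_sub_ge v (v + 1) Hv' ltac:(lra)) as Hratio.
  pose proof (ln_sub_ge (2 * v + 1) (v + 1) ltac:(lra) ltac:(lra)) as Hsum.
  replace (1 - v / (v + 1)) with (/ (v + 1)) in Hratio by (field; lra).
  replace (1 - (2 * v + 1) / (v + 1)) with (- (v * / (v + 1))) in Hsum
    by (field; lra).
  assert (v * / (v + 1) <= v * (ln (v + 1) - ln v))
    by (apply Rmult_le_compat_l; lra).
  lra.
Qed.

Lemma xlnx_succ_sub_le_sqrt v : 0 <= v ->
  xlnx (v + 1) - xlnx v <= 2 * sqrt (v * (v + 1)).
Proof.
  intros Hv. unfold xlnx. destruct (Req_dec v 0) as [->|Hv0].
  { rewrite Rplus_0_l, ln_1, !Rmult_0_l, sqrt_0. lra. }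
  set (s := sqrt v). set (t := sqrt (v + 1)).
  assert (Hs : 0 < s) by (apply sqrt_lt_R0; lra).
  assert (Ht : 0 < t) by (apply sqrt_lt_R0; lra).
  assert (Ess : s * s = v) by (apply sqrt_sqrt; lra).
  assert (Ett : t * t = v + 1) by (apply sqrt_sqrt; lra).
  rewrite sqrt_mult by lra. fold s t.
  assert (Hln : ln (v + 1) - ln v = 2 * (ln t - ln s)).
  { rewrite <- Ett, <- Ess, !ln_mult by lra. ring. }
  assert (Hroots : v * (ln t - ln s) <= s * t - v).
  { replace (s * t - v) with (v * (t / s - 1)) by (rewrite <- Ess; field; lra).
    apply Rmult_le_compat_l; [lra|]. now apply ln_sub_le. }
  pose proof (ln_le_sub_1 (v + 1) ltac:(lra)).
  replace ((v + 1) * ln (v + 1) - v * ln v)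
    with (ln (v + 1) + v * (ln (v + 1) - ln v)) by ring.
  rewrite Hln. lra.
Qed.

Lemma ln_le_fpaper x : 1 <= x -> ln x <= fpaper x.
Proof.
  intros Hx. rewrite fpaper_xlnx by lra.
  replace x with (2 * ((x - 1) / 2) + 1) at 1 by field.
  apply ln_le_xlnx_succ_sub. lra.
Qed.

Lemma fpaper_le_sqrt x : 1 <= x -> fpaper x <= sqrt (x ^ 2 - 1).
Proof.
  intros Hx. rewrite fpaper_xlnx by lra.
  replace (x ^ 2 - 1) with (2 * 2 * ((x - 1) / 2 * ((x - 1) / 2 + 1))) by field.
  rewrite sqrt_mult_alt, sqrt_square by lra.
  apply xlnx_succ_sub_le_sqrt. lra.
Qed.

Lemma fpaper_bounds x : 0 <= fpaper x <= sqrt (x ^ 2 - 1).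
Proof.
  destruct (Rle_dec x 1) as [Hx|Hx].
  - rewrite fpaper_le_1 by lra. split; [lra|apply sqrt_pos].
  - assert (0 <= ln x) by (rewrite <- ln_1; apply ln_le; lra).
    pose proof (ln_le_fpaper x ltac:(lra)).
    pose proof (fpaper_le_sqrt x ltac:(lra)). lra.
Qed.

Definition fpaper_deriv (x : R) : R := ln (1 + 2 / (x - 1)) / 2.

Lemma is_derive_fpaper x : 1 < x -> is_derive fpaper x (fpaper_deriv x).
Proof.
  intros Hx.
  apply is_derive_ext_loc
    with (fun y => xlnx ((y - 1) / 2 + 1) - xlnx ((y - 1) / 2)).
  { apply filter_imp with (fun y => 1 < y); [|exact (open_gt 1 x Hx)].
    intros y Hy. symmetry. apply fpaper_xlnx. lra. }
  unfold xlnx, fpaper_deriv. auto_derive.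
  - repeat split; lra.
  - replace (1 + 2 / (x - 1)) with (((x - 1) / 2 + 1) / ((x - 1) / 2))
      by (field; lra).
    change ((x + - (1)) * / 2) with ((x - 1) / 2).
    set (v := (x - 1) / 2). assert (0 < v) by (unfold v; lra).
    rewrite ln_div by lra. field; lra.
Qed.

Lemma fpaper_deriv_pos x : 1 < x -> 0 < fpaper_deriv x.
Proof.
  intros Hx. unfold fpaper_deriv. apply Rdiv_lt_0_compat; [|lra].
  rewrite <- ln_1. apply ln_increasing; [lra|].
  assert (0 < 2 / (x - 1)) by (apply Rdiv_lt_0_compat; lra). lra.
Qed.

Lemma fpaper_deriv_antitone x y : 1 < x -> x <= y -> fpaper_deriv y <= fpaper_deriv x.
Proof.
  intros Hx Hxy. unfold fpaper_deriv. apply Rmult_le_compat_r; [lra|].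
  assert (0 < 2 / (y - 1)) by (apply Rdiv_lt_0_compat; lra).
  apply ln_le; [lra|]. apply Rplus_le_compat_l, Rmult_le_compat_l; [lra|].
  apply Rinv_le_contravar; lra.
Qed.

Lemma fpaper_deriv_to_infty :
  filterlim fpaper_deriv (at_right 1) (Rbar_locally p_infty).
Proof.
  intros P [M HM].
  pose proof (exp_pos (2 * M)) as Hexp.
  assert (Hd : 0 < 2 / exp (2 * M)) by (apply Rdiv_lt_0_compat; lra).
  exists (mkposreal _ Hd). intros y Hy Hy1. simpl in Hy. apply HM.
  apply Rabs_def2 in Hy. unfold minus, plus, opp in Hy. simpl in Hy.
  assert (Hbig : exp (2 * M) < 2 / (y - 1)).
  { apply (Rmult_lt_reg_r (y - 1)); [lra|].
    replace (2 / (y - 1) * (y - 1)) with 2 by (field; lra).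
    replace 2 with (exp (2 * M) * (2 / exp (2 * M))) at 2 by (field; lra).
    apply Rmult_lt_compat_l; lra. }
  assert (2 * M < ln (1 + 2 / (y - 1))).
  { rewrite <- (ln_exp (2 * M)). apply ln_increasing; lra. }
  unfold fpaper_deriv. lra.
Qed.

Lemma continuity_pt_fpaper x : 1 <= x -> continuity_pt fpaper x.
Proof.
  intros Hx. destruct (Req_dec x 1) as [->|Hx1].
  - apply continuity_pt_filterlim.
    rewrite (fpaper_le_1 1) by lra.
    change (locally 0) with (Rbar_locally (Finite 0)).
    apply (filterlim_le_le (fun _ => 0) _ (fun y => sqrt (y ^ 2 - 1))).
    + exact (filter_forall _ fpaper_bounds).
    + apply filterlim_const.
    + replace (Finite 0) with (Finite (sqrt (1 ^ 2 - 1)))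
        by (f_equal; replace (1 ^ 2 - 1) with 0 by ring; apply sqrt_0).
      apply (filterlim_comp _ _ _ (fun y => y ^ 2 - 1) sqrt _ (locally (1 ^ 2 - 1))).
      * apply (ex_derive_continuous (fun y => y ^ 2 - 1)). auto_derive. exact I.
      * apply continuity_pt_filterlim, continuity_pt_sqrt. lra.
  - apply continuity_pt_filterlim, (ex_derive_continuous fpaper x).
    eexists. apply is_derive_fpaper. lra.
Qed.

Theorem lemma1p7 :
  (* (i) continuity on [1,oo) (relative to [1,oo)) *)
  ((forall x : R, 1 <= x ->
      filterlim fpaper (within (fun y => 1 <= y) (locally x)) (locally (fpaper x))) /\
   (* strictly increasing on [1,oo) *)
   (forall x y : R, 1 <= x -> x < y -> fpaper x < fpaper y) /\
   (* concave on [1,oo) *)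
   (forall x y t : R, 1 <= x -> 1 <= y -> 0 <= t <= 1 ->
      t * fpaper x + (1 - t) * fpaper y <= fpaper (t * x + (1 - t) * y)) /\
   (* f is differentiable on (1,oo) and f'(x) -> +oo as x -> 1+ *)
   (forall x : R, 1 < x -> ex_derive fpaper x) /\
   filterlim (Derive fpaper) (at_right 1) (Rbar_locally p_infty)) /\
  (* (ii) *)
  (exists C : R, 0 < C <= 1 /\
     forall x : R, 1 <= x -> fpaper x <= C * sqrt (x ^ 2 - 1)) /\
  (* (iii) *)
  (forall x : R, 1 <= x -> ln x <= fpaper x).
Proof.
  split; [|split].
  - split; [|split; [|split; [|split]]].
    + intros x Hx. eapply filterlim_filter_le_1; [apply filter_le_within|].
      apply continuity_pt_filterlim, continuity_pt_fpaper, Hx.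
    + exact (strict_increasing_of_derive_pos _ _ _ continuity_pt_fpaper
               is_derive_fpaper fpaper_deriv_pos).
    + exact (concave_of_derive_antitone _ _ _ continuity_pt_fpaper
               is_derive_fpaper fpaper_deriv_antitone).
    + intros x Hx. eexists. apply is_derive_fpaper, Hx.
    + apply (filterlim_ext_loc fpaper_deriv); [|exact fpaper_deriv_to_infty].
      exists (mkposreal 1 Rlt_0_1). intros y _ Hy.
      symmetry. apply is_derive_unique, is_derive_fpaper, Hy.
  - exists 1. split; [lra|]. intros x Hx. rewrite Rmult_1_l.
    apply fpaper_le_sqrt, Hx.
  - exact ln_le_fpaper.
Qed.
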